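(* Let $f,g$ be parking functions and $F_f^*,F_g^*$ the dual basis elements in the graded dual $\mathrm{PSym}^*$ (whose product is the transpose of the coproduct of $\mathrm{PSym}$). Then $$F_f^*\cdot F_g^*=\sum_{h:\ f\backslash g\ \le_P\ h\ \le_P\ f/g}F_h^*.$$
   Context: $\mathrm{PBT}_n$: planar binary trees with $n+1$ leaves, numbered left to right; $\mathrm{Des}(t)=\{1\le i\le n-1:\text{the }(i+1)\text{-st leaf is a right child}\}$. For $\sigma\in S_n$, $\mathrm{Des}(\sigma)=\{i:\sigma(i)>\sigma(i+1)\}$, $\mathrm{Inv}(\sigma)=\{(i,j):i<j,\sigma(i)>\sigma(j)\}$. A parking function of degree $n$ is a pair $(\sigma,t)\in S_n\times \mathrm{PBT}_n$ with $\mathrm{Des}(t)\subseteq\mathrm{Des}(\sigma)$. Weak order $\sigma\le_w\tau$ iff $\mathrm{Inv}(\sigma)\subseteq\mathrm{Inv}(\tau)$; Tamari order $\le_T$: reflexive–transitive closure of replacing a subtree $x(A,y(B,C))$ by $x(y(A,B),C)$. Parking order: $(\sigma,s)\le_P(\tau,t)$ iff $\sigma\le_w\tau$ and $s\le_T t$. Splitting of binary trees: for $0\le i\le n$, with $P$ the path from the root to leaf $i+1$, ${}^it$ (resp. $t^i$) is obtained by deleting at each node of $P$ the child strictly to the right (resp. left) of the path with its subtree and contracting nodes with one child. For $f=(\sigma,t)$, ${}^if=(\mathrm{std}(\sigma(1)\cdots\sigma(i)),{}^it)$ and $f^i=(\mathrm{std}(\sigma(i+1)\cdots\sigma(n)),t^i)$,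 where $\mathrm{std}$ replaces the letters of a word with distinct letters by $1,2,\dots$ preserving relative order. $\mathrm{PSym}$ has basis $\{F_f\}$ over parking functions with coproduct $\Delta(F_f)=\sum_{i=0}^{n}F_{{}^if}\otimes F_{f^i}$. For $f=(\sigma,s)$ of degree $n$ and $g=(\tau,t)$ of degree $m$: $f/g=((\sigma(1)+m)\cdots(\sigma(n)+m)\tau(1)\cdots\tau(m),\ s/t)$ and $f\backslash g=(\sigma(1)\cdots\sigma(n)(\tau(1)+n)\cdots(\tau(m)+n),\ s\backslash t)$, where for trees $s/t$ identifies the root of $s$ with the leftmost leaf of $t$, and $s\backslash t$ identifies the root of $t$ with the rightmost leaf of $s$. *)

From HB Require Import structures.
From mathcomp Require Import all_boot.
Set Implicit Arguments. Unset Strict Implicit. Unset Printing Implicit Defensive.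

Inductive bt := Lf | Nd of bt & bt.

Fixpoint bt_eqb (s t : bt) : bool :=
  match s, t with
  | Lf, Lf => true
  | Nd l r, Nd l' r' => bt_eqb l l' && bt_eqb r r'
  | _, _ => false
  end.

Lemma bt_eqP : Equality.axiom bt_eqb.
Proof.
elim=> [|l IHl r IHr] [|l' r'] /=; try by constructor.
by apply: (iffP andP) => [[/IHl -> /IHr ->]|[<- <-]]; split; [apply/IHl|apply/IHr].
Qed.

HB.instance Definition _ := hasDecEq.Build bt bt_eqP.

(** number of internal nodes; a tree in PBT_n has n internal nodes (n+1 leaves) *)
Fixpoint nodes (t : bt) : nat :=
  match t with Lf => 0 | Nd l r => (nodes l + nodes r).+1 end.

Fixpoint leafdirs_aux (t : bt) (isright : bool) : seq bool :=
  match t with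
  | Lf => [:: isright]
  | Nd l r => leafdirs_aux l false ++ leafdirs_aux r true
  end.
Definition leafdirs (t : bt) := leafdirs_aux t false.

(** Des(t) = { 1 <= i <= n-1 : the (i+1)-st leaf is a right child } *)
Definition tdes (t : bt) : seq nat :=
  [seq i <- iota 1 (nodes t).-1 | nth false (leafdirs t) i].

(** Permutations of {1..n} as words sigma(1)...sigma(n). *)
Definition is_perm (s : seq nat) := perm_eq s (iota 1 (size s)).

(** Des(sigma) = { i : sigma(i) > sigma(i+1) } (1-indexed) *)
Definition pdes (s : seq nat) : seq nat :=
  [seq i <- iota 1 (size s).-1 | nth 0 s i < nth 0 s i.-1].

(** parking functions: pairs (sigma, t) *)
Definition pfun := (seq nat * bt)%type.
Definition pdeg (f : pfun) := size f.1.
Definition is_pf (f : pfun) : bool :=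
  [&& is_perm f.1, nodes f.2 == size f.1 & all (fun i => i \in pdes f.1) (tdes f.2)].

(** weak order: Inv(sigma) included in Inv(tau) (0-indexed positions) *)
Definition weak_le (s t : seq nat) : Prop :=
  size s = size t /\
  forall i j, i < j < size s -> nth 0 s j < nth 0 s i -> nth 0 t j < nth 0 t i.

Inductive tam_step : bt -> bt -> Prop :=
  | tam_root A B C : tam_step (Nd A (Nd B C)) (Nd (Nd A B) C)
  | tam_left l l' r : tam_step l l' -> tam_step (Nd l r) (Nd l' r)
  | tam_right l r r' : tam_step r r' -> tam_step (Nd l r) (Nd l r').

Inductive tam_le : bt -> bt -> Prop :=
  | tam_refl t : tam_le t t
  | tam_trans s t u : tam_step s t -> tam_le t u -> tam_le s u.

Definition park_le (f g : pfun) : Prop := weak_le f.1 g.1 /\ tam_le f.2 g.2.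

Definition std (s : seq nat) : seq nat :=
  [seq (count (fun y => y < x) s).+1 | x <- s].

(** splitting of trees along the path to leaf i+1 (leaves numbered from 1) *)
Fixpoint tsplitl (i : nat) (t : bt) : bt :=
  match t with
  | Lf => Lf
  | Nd l r => if i < (nodes l).+1 then tsplitl i l
              else Nd l (tsplitl (i - (nodes l).+1) r)
  end.
Fixpoint tsplitr (i : nat) (t : bt) : bt :=
  match t with
  | Lf => Lf
  | Nd l r => if i < (nodes l).+1 then Nd (tsplitr i l) r
              else tsplitr (i - (nodes l).+1) r
  end.

Definition psplitl (i : nat) (f : pfun) : pfun := (std (take i f.1), tsplitl i f.2).
Definition psplitr (i : nat) (f : pfun) : pfun := (std (drop i f.1), tsplitr i f.2).

(** tree grafting: s/t (root of s onto leftmost leaf of t), s\t (root of t onto rightmost leaf of s) *)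
Fixpoint tover (s t : bt) : bt :=
  match t with Lf => s | Nd l r => Nd (tover s l) r end.
Fixpoint tunder (s t : bt) : bt :=
  match s with Lf => t | Nd l r => Nd l (tunder r t) end.

Definition pover (f g : pfun) : pfun :=
  ([seq x + pdeg g | x <- f.1] ++ g.1, tover f.2 g.2).
Definition punder (f g : pfun) : pfun :=
  (f.1 ++ [seq x + pdeg f | x <- g.1], tunder f.2 g.2).

(** Coefficient of F_f (x) F_g in Delta(F_h) = sum_{i=0}^{deg h} F_{^i h} (x) F_{h^i}.
    By definition of the graded dual PSym^* (product = transpose of coproduct),
    this is exactly the coefficient of F_h^* in F_f^* . F_g^*. *)
Definition dual_prod_coef (f g h : pfun) : nat :=
  count (fun i => (psplitl i h == f) && (psplitr i h == g)) (iota 0 (pdeg h).+1).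

(* The coefficient of F_h^* in F_f^* . F_g^* is the number of positions i with
   ^i h = f and h^i = g.  Comparing degrees, only i = deg f can contribute, so
   the coefficient is 0 or 1 (dual_prod_coefE).  It remains to show that h
   splits into (f, g) at deg f exactly when h lies in the interval; the
   parking order is a product order, so this is proved separately for
   - trees (tamari_interval): the splitting maps are Tamari-monotone, every
     tree u satisfies  ^i u \ u^i <= u <= ^i u / u^i, and s \ t, s / t split
     back into (s, t); antisymmetry of the Tamari order (via a potential that
     increases under rotations) closes the argument;
   - permutations (weak_interval_std): inversions of f \ g and f / g are
     those inside the two blocks (plus all cross pairs for f / g), and a word
     standardizes to a permutation iff it has the same inversions. *)
From mathcomp Require Import all_boot zify.
Set Implicit Arguments. Unset Strict Implicit. Unset Printing Implicit Defensive.

Lemma tam_le_step s t : tam_step s t -> tam_le s t.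
Proof. by move=> H; apply: tam_trans H (tam_refl _). Qed.

Lemma tam_le_trans s t u : tam_le s t -> tam_le t u -> tam_le s u.
Proof. by elim=> // x y z Hxy _ IH Hzu; apply: tam_trans Hxy (IH Hzu). Qed.

Lemma tam_le_nodeL l l' r : tam_le l l' -> tam_le (Nd l r) (Nd l' r).
Proof.
elim=> [t|x y z Hxy _ IH]; first exact: tam_refl.
by apply: tam_trans IH; apply: tam_left.
Qed.

Lemma tam_le_nodeR l r r' : tam_le r r' -> tam_le (Nd l r) (Nd l r').
Proof.
elim=> [t|x y z Hxy _ IH]; first exact: tam_refl.
by apply: tam_trans IH; apply: tam_right.
Qed.

Lemma nodes_step s t : tam_step s t -> nodes s = nodes t.
Proof. by elim=> /= *; lia. Qed.

(* Sum over all internal nodes of the size of their left subtree; a rotation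
   x(A, y(B, C)) -> y(x(A, B), C) increases it by nodes A + 1. *)
Fixpoint left_weight (t : bt) : nat :=
  match t with Lf => 0 | Nd l r => left_weight l + left_weight r + nodes l end.

Lemma left_weight_step s t : tam_step s t -> left_weight s < left_weight t.
Proof.
elim=> /= [A B C|l l' r H IH|l r r' H IH]; try lia.
by rewrite (nodes_step H); lia.
Qed.

Lemma left_weight_le s t : tam_le s t -> s = t \/ left_weight s < left_weight t.
Proof.
elim=> [x|x y z H _ [<-|IH]]; [by left|right; exact: left_weight_step|].
by right; have := left_weight_step H; lia.
Qed.

Lemma tam_le_antisym s t : tam_le s t -> tam_le t s -> s = t.
Proof. by move=> /left_weight_le [//|H1] /left_weight_le [->|H2] //; lia. Qed.

Lemma tsplitl0 t : tsplitl 0 t = Lf.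
Proof. by elim: t. Qed.

Lemma tsplitr0 t : tsplitr 0 t = t.
Proof. by elim: t => //= l ->. Qed.

Lemma tsplitl_all t i : nodes t <= i -> tsplitl i t = t.
Proof.
elim: t i => //= l _ r IHr i Hi.
by rewrite ifF ?IHr //; lia.
Qed.

Lemma tsplitr_all t i : nodes t <= i -> tsplitr i t = Lf.
Proof.
elim: t i => //= l _ r IHr i Hi.
by rewrite ifF ?IHr //; lia.
Qed.

Lemma nodes_tover s t : nodes (tover s t) = nodes s + nodes t.
Proof. by elim: t => [|l IHl r _] /=; lia. Qed.

Lemma tsplit_tunder s t :
  tsplitl (nodes s) (tunder s t) = s /\ tsplitr (nodes s) (tunder s t) = t.
Proof.
elim: s => [|s1 _ s2 [IHl IHr]] /=; first by rewrite tsplitl0 tsplitr0.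
have -> : ((nodes s1 + nodes s2).+1 < (nodes s1).+1) = false by lia.
by rewrite subSS addKn IHl IHr.
Qed.

Lemma tsplit_tover s t :
  tsplitl (nodes s) (tover s t) = s /\ tsplitr (nodes s) (tover s t) = t.
Proof.
elim: t => [|t1 [IHl IHr] t2 _] /=; first by rewrite tsplitl_all ?tsplitr_all.
by rewrite nodes_tover ltnS leq_addr IHl IHr.
Qed.

Lemma tunder_tsplit_le u i : tam_le (tunder (tsplitl i u) (tsplitr i u)) u.
Proof.
have graft_node x y r : tam_le (tunder x (Nd y r)) (Nd (tunder x y) r).
  elim: x => [|x1 _ x2 IH] /=; first exact: tam_refl.
  apply: tam_le_trans (tam_le_nodeR _ IH) _.
  exact/tam_le_step/tam_root.
elim: u i => [|l IHl r IHr] i /=; first exact: tam_refl.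
case: ifP => _; last exact: tam_le_nodeR.
exact: tam_le_trans (graft_node _ _ _) (tam_le_nodeL _ (IHl i)).
Qed.

Lemma tover_tsplit_ge u i : tam_le u (tover (tsplitl i u) (tsplitr i u)).
Proof.
have graft_node y l x : tam_le (Nd l (tover x y)) (tover (Nd l x) y).
  elim: y => [|y1 IH y2 _] /=; first exact: tam_refl.
  exact: tam_trans (tam_root _ _ _) (tam_le_nodeL _ IH).
elim: u i => [|l IHl r IHr] i /=; first exact: tam_refl.
case: ifP => _; first exact: tam_le_nodeL.
exact: tam_le_trans (tam_le_nodeR _ (IHr _)) (graft_node _ _ _).
Qed.

Lemma tsplit_step u v : tam_step u v -> forall i,
  tam_le (tsplitl i u) (tsplitl i v) /\ tam_le (tsplitr i u) (tsplitr i v).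
Proof.
elim=> [A B C|l l' r H IH|l r r' H IH] i /=.
- (* At the rotated node, the split leaf lies in A, in B or in C. *)
  case: ifP => H1; case: ifP => H2; try case: ifP => H3; try case: ifP => H4;
    try (exfalso; lia); try (split; exact: tam_refl).
  + by split; [exact: tam_refl | exact/tam_le_step/tam_root].
  + have -> : i - (nodes A + nodes B).+2 = i - (nodes A).+1 - (nodes B).+1 by lia.
    by split; [exact/tam_le_step/tam_root | exact: tam_refl].
- rewrite (nodes_step H); case: ifP => _; last first.
    by split; [exact/tam_le_nodeL/tam_le_step | exact: tam_refl].
  by have [Hl Hr] := IH i; split; [|apply: tam_le_nodeL].
- case: ifP => _.
    by split; [exact: tam_refl | exact/tam_le_nodeR/tam_le_step].
  by have [Hl Hr] := IH (i - (nodes l).+1); split; [apply: tam_le_nodeR|].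
Qed.

Lemma tsplit_mono u v : tam_le u v -> forall i,
  tam_le (tsplitl i u) (tsplitl i v) /\ tam_le (tsplitr i u) (tsplitr i v).
Proof.
elim=> [t|x y z H _ IH] i; first by split; exact: tam_refl.
have [Hl Hr] := tsplit_step H i; have [Hl' Hr'] := IH i.
by split; [exact: tam_le_trans Hl Hl' | exact: tam_le_trans Hr Hr'].
Qed.

Lemma tamari_interval s t u :
  (tam_le (tunder s t) u /\ tam_le u (tover s t)) <->
  (tsplitl (nodes s) u = s /\ tsplitr (nodes s) u = t).
Proof.
split=> [[Hlo Hhi] | [El Er]].
  have [Ul Ur] := tsplit_mono Hlo (nodes s); have [Ol Or] := tsplit_mono Hhi (nodes s).
  have [El Er] := tsplit_tunder s t; have [Fl Fr] := tsplit_tover s t.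
  rewrite El Er in Ul Ur; rewrite Fl Fr in Ol Or.
  by split; apply: tam_le_antisym.
have := tunder_tsplit_le u (nodes s); have := tover_tsplit_ge u (nodes s).
by rewrite El Er.
Qed.

Definition inversion (w : seq nat) (i j : nat) : bool := nth 0 w j < nth 0 w i.

Lemma perm_nth_bound s k : is_perm s -> k < size s -> 0 < nth 0 s k <= size s.
Proof. by move=> /perm_mem Hs Hk; move: (mem_nth 0 Hk); rewrite Hs mem_iota add1n ltnS. Qed.

Lemma uniq_perm s : is_perm s -> uniq s.
Proof. by move=> /perm_uniq ->; apply: iota_uniq. Qed.

Lemma std_perm s : is_perm s -> std s = s.
Proof.
move=> Hp; apply: map_id_in => x; rewrite (perm_mem Hp) mem_iota => Hx.
rewrite (permP Hp) -size_filter.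
have -> : x = 1 + x.-1 by lia.
by rewrite filter_iota_ltn ?size_iota //; lia.
Qed.

Lemma count_lt_mono w x y : x \in w ->
  (count (fun z => z < x) w < count (fun z => z < y) w) = (x < y).
Proof.
move=> Hx.
have count_le a b : a <= b -> count (fun z => z < a) w <= count (fun z => z < b) w.
  by move=> Hab; apply: sub_count => z /= Hz; apply: leq_trans Hz Hab.
case: (ltnP x y) => Hxy; last by apply/negbTE; rewrite -leqNgt count_le.
elim: w Hx {count_le} => //= z w IH; rewrite in_cons => /orP [/eqP <-|Hx].
  by rewrite ltnn Hxy add0n add1n ltnS; apply: sub_count => u /= Hu; lia.
by have := IH Hx; case Hzx: (z < x); case Hzy: (z < y); rewrite /= ?add0n ?add1n; lia.
Qed.

Lemma std_cmp w j k : j < size w -> k < size w ->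
  (nth 0 (std w) j < nth 0 (std w) k) = (nth 0 w j < nth 0 w k).
Proof. by move=> Hj Hk; rewrite !(nth_map 0) // ltnS count_lt_mono ?mem_nth. Qed.

Lemma std_eq_cmp w w' : size w = size w' ->
  (forall j k, j < size w -> k < size w -> (nth 0 w j < nth 0 w k) = (nth 0 w' j < nth 0 w' k)) ->
  std w = std w'.
Proof.
move=> Hsz Hcmp; apply: (@eq_from_nth _ 0); first by rewrite !size_map.
move=> k; rewrite size_map => Hk; rewrite !(nth_map 0) -?Hsz //; congr S.
have count_by_index t x : count (fun y => y < x) t = count (fun i => nth 0 t i < x) (iota 0 (size t)).
  by rewrite -{1}(mkseq_nth 0 t) /mkseq count_map.
rewrite !count_by_index -Hsz; apply: eq_in_count => j; rewrite mem_iota /= => Hj.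
exact: Hcmp.
Qed.

Lemma lt_nth_swap (w : seq nat) j k : uniq w -> j < size w -> k < size w -> j != k ->
  (nth 0 w j < nth 0 w k) = ~~ (nth 0 w k < nth 0 w j).
Proof.
move=> Hw Hj Hk Hjk; rewrite -leqNgt [RHS]leq_eqVlt.
by rewrite (nth_uniq 0 Hj Hk Hw) (negbTE Hjk).
Qed.

Lemma cmp_of_inversions w w' : uniq w -> uniq w' -> size w = size w' ->
  (forall i j, i < j < size w -> inversion w i j = inversion w' i j) ->
  forall j k, j < size w -> k < size w -> (nth 0 w j < nth 0 w k) = (nth 0 w' j < nth 0 w' k).
Proof.
move=> Hw Hw' Hsz Hinv j k Hj Hk.
have Hj' : j < size w' by rewrite -Hsz.
have Hk' : k < size w' by rewrite -Hsz.
case: (ltngtP j k) => [Hjk|Hkj|->]; last by rewrite !ltnn.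
- have Hne : j != k by rewrite neq_ltn Hjk.
  by rewrite (lt_nth_swap Hw) // (lt_nth_swap Hw') // -!/(inversion _ _ _) Hinv // Hjk.
- by apply: Hinv; rewrite Hkj.
Qed.

Lemma std_eq_perm w s : uniq w -> is_perm s -> size w = size s ->
  std w = s <-> (forall i j, i < j < size s -> inversion w i j = inversion s i j).
Proof.
move=> Hw Hs Hsz; split => [<- i j /andP [Hij Hj] | Hinv].
  rewrite size_map in Hj; have Hi := ltn_trans Hij Hj.
  by rewrite /inversion std_cmp.
rewrite -(std_perm Hs); apply: std_eq_cmp => //.
by apply: cmp_of_inversions => //; [exact: uniq_perm | rewrite Hsz].
Qed.

Lemma weak_leE s t : weak_le s t =
  (size s = size t /\ forall i j, i < j < size s -> inversion s i j -> inversion t i j).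
Proof. by []. Qed.

Lemma inversion_under s t i j : is_perm s -> i < j < size s + size t ->
  inversion (s ++ [seq x + size s | x <- t]) i j =
  if j < size s then inversion s i j
  else if i < size s then false else inversion t (i - size s) (j - size s).
Proof.
move=> Hs /andP [Hij Hj]; rewrite /inversion !nth_cat.
case: ifP => Hjs; first by rewrite (ltn_trans Hij Hjs).
rewrite (nth_map 0); last by lia.
case: ifP => His; last by rewrite (nth_map 0) ?ltn_add2r //; lia.
by have := perm_nth_bound Hs His; lia.
Qed.

Lemma inversion_over s t i j : is_perm s -> is_perm t -> i < j < size s + size t ->
  inversion ([seq x + size t | x <- s] ++ t) i j =
  if j < size s then inversion s i j
  else if i < size s then true else inversion t (i - size s) (j - size s).
Proof.
move=> Hs Ht /andP [Hij Hj]; rewrite /inversion !nth_cat size_map.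
case: ifP => Hjs; first by rewrite (ltn_trans Hij Hjs) !(nth_map 0) ?ltn_add2r // (ltn_trans Hij).
case: ifP => His //; rewrite (nth_map 0) //.
have Hjt : j - size s < size t by lia.
by have := perm_nth_bound Hs His; have := perm_nth_bound Ht Hjt; lia.
Qed.

Lemma weak_interval s t p : is_perm s -> is_perm t ->
  (weak_le (s ++ [seq x + size s | x <- t]) p /\ weak_le p ([seq x + size t | x <- s] ++ t)) <->
  [/\ size p = size s + size t,
      forall i j, i < j < size s -> inversion p i j = inversion s i j &
      forall i j, i < j < size t ->
        inversion p (size s + i) (size s + j) = inversion t i j].
Proof.
move=> Hs Ht; rewrite !weak_leE size_cat size_map.
have lower := inversion_under (t := t) Hs; have upper := inversion_over Hs Ht.
split=> [[[<- Wu] [_ Wp]] | [Hp Hl Hr]].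
  split=> // [i j Hij | i j Hij].
  - have Hij' : i < j < size s + size t by move: Hij; lia.
    have Hjs : j < size s by case/andP: Hij.
    apply/idP/idP => H.
    + by move: (Wp i j Hij' H); rewrite (upper _ _ Hij') Hjs.
    + by apply: (Wu _ _ Hij'); rewrite (lower _ _ Hij') Hjs.
  - have Hij' : size s + i < size s + j < size s + size t by move: Hij; lia.
    have E k : (size s + k < size s) = false by lia.
    apply/idP/idP => H.
    + by move: (Wp _ _ Hij' H); rewrite (upper _ _ Hij') !E !addKn.
    + by apply: (Wu _ _ Hij'); rewrite (lower _ _ Hij') !E !addKn.
have right_block i j : i < j < size s + size t -> size s <= i ->
    inversion p i j = inversion t (i - size s) (j - size s).
  move=> Hij Hsi; rewrite -Hr; last by lia.
  by rewrite !subnKC //; lia.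
split; split; rewrite ?size_cat ?size_map //; first move=> i j Hij.
  rewrite (lower _ _ Hij); case: ifP => [Hjs|_]; first by rewrite Hl // Hjs andbT; lia.
  by case: ifP => // /negbT; rewrite -leqNgt => His; rewrite right_block //; lia.
rewrite Hp => i j Hij.
rewrite (upper _ _ Hij); case: ifP => [Hjs|_]; first by rewrite Hl // Hjs andbT; lia.
by case: ifP => // /negbT; rewrite -leqNgt => His; rewrite right_block //; lia.
Qed.

Lemma std_blocks s t p : is_perm s -> is_perm t -> is_perm p ->
  size p = size s + size t ->
  (std (take (size s) p) = s <->
     forall i j, i < j < size s -> inversion p i j = inversion s i j) /\
  (std (drop (size s) p) = t <->
     forall i j, i < j < size t -> inversion p (size s + i) (size s + j) = inversion t i j).
Proof.
move=> Hs Ht Hp Hsz; have Hu := uniq_perm Hp.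
split.
- rewrite std_eq_perm ?take_uniq ?size_takel ?Hsz ?leq_addr //.
  split=> H i j Hij; rewrite -H //; rewrite /inversion !nth_take //; lia.
- rewrite std_eq_perm ?drop_uniq ?size_drop ?Hsz ?addKn //.
  by split=> H i j Hij; rewrite -H // /inversion !nth_drop.
Qed.

Lemma weak_interval_std s t p : is_perm s -> is_perm t -> is_perm p ->
  (weak_le (s ++ [seq x + size s | x <- t]) p /\ weak_le p ([seq x + size t | x <- s] ++ t)) <->
  [/\ size p = size s + size t, std (take (size s) p) = s & std (drop (size s) p) = t].
Proof.
move=> Hs Ht Hp; rewrite weak_interval //.
split=> -[Hsz Hl Hr]; have [Bl Br] := std_blocks Hs Ht Hp Hsz.
- by split; [| apply/Bl | apply/Br].
- by split; [| apply/Bl | apply/Br].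
Qed.

Lemma split_degrees f g h i : i <= pdeg h ->
  psplitl i h = f -> psplitr i h = g -> i = pdeg f /\ pdeg h = pdeg f + pdeg g.
Proof.
move=> Hi <- <-; rewrite /pdeg /= !size_map size_drop size_takel //.
by split=> //; rewrite subnKC.
Qed.

Lemma dual_prod_coefE f g h : dual_prod_coef f g h =
  [&& pdeg h == pdeg f + pdeg g, psplitl (pdeg f) h == f & psplitr (pdeg f) h == g].
Proof.
set c := [&& _, _ & _]; rewrite /dual_prod_coef.
rewrite (@eq_in_count _ _ (fun i => (i == pdeg f) && c)); last first.
  move=> i; rewrite mem_iota add0n ltnS /= => Hi.
  apply/andP/andP => [[/eqP El /eqP Er] | [/eqP -> /and3P [_ /eqP -> /eqP ->]]] //.
  have [Ei Hdeg] := split_degrees Hi El Er.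
  by rewrite /c Hdeg -Ei El Er !eqxx.
case Hc: c; last by rewrite (eq_count (a2 := pred0)) ?count_pred0 // => i; rewrite andbF.
rewrite (eq_count (a2 := pred1 (pdeg f))) => [|i]; last by rewrite andbT.
rewrite count_uniq_mem ?iota_uniq // mem_iota.
by move: Hc => /and3P [/eqP -> _ _]; rewrite add0n ltnS leq_addr.
Qed.

Lemma parking_interval f g h : is_pf f -> is_pf g -> is_pf h ->
  (park_le (punder f g) h /\ park_le h (pover f g)) <->
  [&& pdeg h == pdeg f + pdeg g, psplitl (pdeg f) h == f & psplitr (pdeg f) h == g].
Proof.
case: f g h => [s1 s2] [t1 t2] [p1 p2].
move=> /and3P [Ps /eqP Ns _] /and3P [Pt _ _] /and3P [Pp _ _].
rewrite /park_le /punder /pover /pdeg /psplitl /psplitr /=.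
have Hw := weak_interval_std Ps Pt Pp; have Ht := tamari_interval s2 t2 p2.
rewrite Ns in Ht.
split=> [[[W1 T1] [W2 T2]] | /and3P [/eqP Hsz /eqP [El1 El2] /eqP [Er1 Er2]]].
- have [Hsz E1 E2] := Hw.1 (conj W1 W2); have [E3 E4] := Ht.1 (conj T1 T2).
  by rewrite Hsz E1 E2 E3 E4 !eqxx.
- have [W1 W2] := Hw.2 (And3 Hsz El1 Er1); have [T1 T2] := Ht.2 (conj El2 Er2).
  by split; split.
Qed.

Unset Implicit Arguments.

Theorem mainTheorem13 (f g h : pfun) :
  is_pf f -> is_pf g -> is_pf h ->
  ((park_le (punder f g) h /\ park_le h (pover f g)) -> dual_prod_coef f g h = 1) /\
  (~ (park_le (punder f g) h /\ park_le h (pover f g)) -> dual_prod_coef f g h = 0).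
Proof.
move=> Hf Hg Hh; have Hint := parking_interval Hf Hg Hh.
rewrite dual_prod_coefE; split=> [/Hint -> // | Hout].
by case: [&& _, _ & _] Hint => // -[_ /(_ isT) /Hout].
Qed.
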